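(* Let $G$ be a connected balanced weighted graph on the vertex set $V=\{1,\dots,n\}$ with symmetric real edge weights $\gamma_{ij}=\gamma_{ji}$, and let $V=V_1\cup V_2$ be a decomposition into two disjoint subsets such that $\gamma_{ij}\ge 0$ whenever $i,j$ lie in the same subset and $\gamma_{ij}\le 0$ whenever $i,j$ lie in different subsets. Let $W\in\mathcal{W}$, let $\kappa>0$, and let $x\in\mathbb{R}^n$ be a global minimizer of $$E_{W,G,\kappa}(x)=\sum_{i=1}^n W(x_i)+\frac{\kappa}{2}\sum_{i,j=1}^n\gamma_{ij}(x_i-x_j)^2 .$$ Then $x_i\neq 0$ for all $i$, and for all $i,j$, $x_i$ and $x_j$ have the same sign if and only if $i$ and $j$ belong to the same subset ($V_1$ or $V_2$).
   Context: A weighted graph $G=(V,E,\Gamma)$ has vertices $V=\{1,\dots,n\}$ and symmetric real weights $\gamma_{ij}=\gamma_{ji}$ (possibly negative) on its edges; $\gamma_{ij}=0$ if $i,j$ are not joined by an edge. $G$ is connected if the graph whose edges are the pairs $\{i,j\}$ with $\gamma_{ij}\neq0$ is connected. $G$ is balanced if every cycle contains an even number of edges with negative weight; for balanced graphs a decomposition $V=V_1\cup V_2$ as in the claim exists (Cartwright–Harary). $\mathcal{W}$ is the set of even functions $W\in C^2(\mathbb{R})$ for which there is some $m>0$ with $W'(\pm m)=0$, $W'(x)>0$ for $x\in(-m,0)\cup(m,\infty)$, $W'(x)<0$ for $x\in(-\infty,-m)\cup(0,m)$, and $\lim_{x\to\pm\infty}W(x)/x^2=\infty$. *)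

From Stdlib Require Import Reals Lra List Relations.
From Coquelicot Require Import Coquelicot.
Open Scope R_scope.

(* Vertices are 0..n-1 (i.e. i < n), corresponding to 1..n in the paper. *)

Fixpoint sumR (n : nat) (f : nat -> R) : R :=
  match n with
  | O => 0
  | S k => sumR k f + f k
  end.

Definition C2 (W : R -> R) : Prop :=
  (forall x, ex_derive W x) /\
  (forall x, ex_derive (Derive W) x) /\
  (forall x, continuous (Derive (Derive W)) x).

Definition in_classW (W : R -> R) : Prop :=
  C2 W /\
  (forall x, W (- x) = W x) /\
  (exists m : R, 0 < m /\
     Derive W m = 0 /\ Derive W (- m) = 0 /\
     (forall x, ((- m < x < 0) \/ m < x) -> Derive W x > 0) /\
     (forall x, (x < - m \/ (0 < x < m)) -> Derive W x < 0)) /\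
  is_lim (fun x => W x / x ^ 2) p_infty p_infty /\
  is_lim (fun x => W x / x ^ 2) m_infty p_infty.

Definition adj (n : nat) (gamma : nat -> nat -> R) (i j : nat) : Prop :=
  (i < n)%nat /\ (j < n)%nat /\ gamma i j <> 0.

Definition connected_graph (n : nat) (gamma : nat -> nat -> R) : Prop :=
  forall i j, (i < n)%nat -> (j < n)%nat ->
    clos_refl_trans_1n nat (adj n gamma) i j.

(* Consecutive pairs of the closed walk v0 v1 ... v_{k-1} v0 *)
Definition cycle_edges (c : list nat) : list (nat * nat) :=
  match c with
  | nil => nil
  | v0 :: _ => combine c (tl c ++ v0 :: nil)
  end.

Definition is_cycle (n : nat) (gamma : nat -> nat -> R) (c : list nat) : Prop :=
  (3 <= length c)%nat /\ NoDup c /\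
  List.Forall (fun e => adj n gamma (fst e) (snd e)) (cycle_edges c).

Definition num_negative_edges (gamma : nat -> nat -> R) (c : list nat) : nat :=
  length (filter (fun e => if Rlt_dec (gamma (fst e) (snd e)) 0 then true else false)
                 (cycle_edges c)).

Definition balanced (n : nat) (gamma : nat -> nat -> R) : Prop :=
  forall c, is_cycle n gamma c -> Nat.Even (num_negative_edges gamma c).

Definition energy (n : nat) (W : R -> R) (gamma : nat -> nat -> R) (kappa : R)
  (x : nat -> R) : R :=
  sumR n (fun i => W (x i)) +
  kappa / 2 * sumR n (fun i => sumR n (fun j => gamma i j * (x i - x j) ^ 2)).

From Stdlib Require Import Reals Lra Lia Relations Classical.
From Coquelicot Require Import Coquelicot.
Open Scope R_scope.

(* Let s_i = 1 on V1 and s_i = -1 on V2, so that s_i s_j gamma_ij >= 0.  Replacing x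
   by z_i = s_i |x_i| leaves sum W(x_i) unchanged (W is even) and does not increase
   any interaction term; at a minimizer they must therefore all stay equal, which
   means (s_i x_i)(s_j x_j) >= 0 along every edge.  No coordinate vanishes: if x = 0,
   the configuration s_i m (m the positive well of W) has lower energy; otherwise
   connectivity gives an edge k-j with x_k = 0 <> x_j, and moving z_k from 0 to s_k e
   decreases W(z_k) and changes the interaction by at most 2 (e^2 G - 2 e A), where
   G = sum_j |gamma_kj| and A = sum_j |gamma_kj| |x_j| are positive, which is negative
   for small e > 0.  Hence s_i x_i is nonzero and keeps its sign along edges, so on
   the whole connected graph. *)

Lemma sumR_ext (n : nat) (f g : nat -> R) :
  (forall i, (i < n)%nat -> f i = g i) -> sumR n f = sumR n g.
Proof.
  induction n as [|n IH]; intros H; simpl; [reflexivity|].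
  rewrite IH by (intros; apply H; lia). rewrite H by lia. reflexivity.
Qed.

Lemma sumR_le (n : nat) (f g : nat -> R) :
  (forall i, (i < n)%nat -> f i <= g i) -> sumR n f <= sumR n g.
Proof.
  induction n as [|n IH]; intros H; simpl; [lra|].
  apply Rplus_le_compat; [apply IH; intros; apply H | apply H]; lia.
Qed.

Lemma sumR_le_eq (n : nat) (f g : nat -> R) :
  (forall i, (i < n)%nat -> f i <= g i) -> sumR n f = sumR n g ->
  forall i, (i < n)%nat -> f i = g i.
Proof.
  induction n as [|n IH]; simpl; intros Hle Heq i Hi; [lia|].
  assert (sumR n f <= sumR n g) by (apply sumR_le; intros; apply Hle; lia).
  assert (f n <= g n) by (apply Hle; lia).
  destruct (Nat.eq_dec i n) as [->|Hin]; [lra|].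
  apply IH; [intros; apply Hle; lia | lra | lia].
Qed.

Lemma sumR_plus (n : nat) (f g : nat -> R) :
  sumR n (fun i => f i + g i) = sumR n f + sumR n g.
Proof. induction n as [|n IH]; simpl; [ring|]. rewrite IH; ring. Qed.

Lemma sumR_scal (n : nat) (c : R) (f : nat -> R) :
  sumR n (fun i => c * f i) = c * sumR n f.
Proof. induction n as [|n IH]; simpl; [ring|]. rewrite IH; ring. Qed.

Lemma sumR_const (n : nat) (c : R) : sumR n (fun _ => c) = INR n * c.
Proof. induction n as [|n IH]; simpl sumR; [simpl; ring|]. rewrite IH, S_INR; ring. Qed.

Lemma sumR_nonneg (n : nat) (f : nat -> R) :
  (forall i, (i < n)%nat -> 0 <= f i) -> 0 <= sumR n f.
Proof.
  induction n as [|n IH]; intros H; simpl; [lra|].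
  apply Rplus_le_le_0_compat; [apply IH; intros; apply H | apply H]; lia.
Qed.

Lemma sumR_ge_term (n : nat) (f : nat -> R) (k : nat) :
  (k < n)%nat -> (forall i, (i < n)%nat -> 0 <= f i) -> f k <= sumR n f.
Proof.
  induction n as [|n IH]; intros Hk H; simpl; [lia|].
  destruct (Nat.eq_dec k n) as [->|Hkn].
  - assert (0 <= sumR n f) by (apply sumR_nonneg; intros; apply H; lia). lra.
  - assert (f k <= sumR n f) by (apply IH; [lia | intros; apply H; lia]).
    assert (0 <= f n) by (apply H; lia). lra.
Qed.

Lemma sumR_change_one (n : nat) (f g : nat -> R) (k : nat) :
  (k < n)%nat -> (forall i, (i < n)%nat -> i <> k -> f i = g i) ->
  sumR n f = sumR n g + (f k - g k).
Proof.
  induction n as [|n IH]; simpl; intros Hk H; [lia|].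
  destruct (Nat.eq_dec k n) as [->|Hkn].
  - rewrite (sumR_ext n f g) by (intros; apply H; lia). ring.
  - rewrite IH by (try intros; try apply H; lia). rewrite (H n) by lia. ring.
Qed.

Definition sg (b : bool) : R := if b then 1 else -1.

Lemma Rabs_sg (b : bool) : Rabs (sg b) = 1.
Proof. unfold Rabs; destruct b; simpl; destruct Rcase_abs; lra. Qed.

Lemma sg_sqr (b : bool) : sg b * sg b = 1.
Proof. destruct b; simpl; ring. Qed.

Lemma sg_mul_nonneg (b1 b2 : bool) (g : R) :
  (b1 = b2 -> 0 <= g) -> (b1 <> b2 -> g <= 0) -> 0 <= sg b1 * sg b2 * g.
Proof.
  destruct b1, b2; simpl; intros Hsame Hdiff;
    [specialize (Hsame eq_refl) | specialize (Hdiff ltac:(discriminate))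
    | specialize (Hdiff ltac:(discriminate)) | specialize (Hsame eq_refl)]; lra.
Qed.

Lemma sg_mul_abs (b1 b2 : bool) (g : R) :
  0 <= sg b1 * sg b2 * g -> sg b1 * sg b2 * g = Rabs g.
Proof.
  intros H. rewrite <- (Rabs_pos_eq _ H), !Rabs_mult, !Rabs_sg. ring.
Qed.

Lemma W_sg (W : R -> R) (b : bool) (t : R) :
  (forall x, W (- x) = W x) -> W (sg b * t) = W t.
Proof.
  intros Heven. destruct b; simpl.
  - now rewrite Rmult_1_l.
  - replace (-1 * t) with (- t) by ring. apply Heven.
Qed.

Lemma W_sg_abs (W : R -> R) (b : bool) (t : R) :
  (forall x, W (- x) = W x) -> W (sg b * Rabs t) = W t.
Proof.
  intros Heven. rewrite W_sg by exact Heven.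
  unfold Rabs; destruct (Rcase_abs t); auto.
Qed.

Lemma pair_term_align_gap (g u v : R) (a b : bool) :
  g * (u - v) ^ 2 - g * (sg a * Rabs u - sg b * Rabs v) ^ 2
  = 2 * (sg a * sg b * g) * (Rabs (u * v) - (sg a * u) * (sg b * v)).
Proof.
  rewrite Rabs_mult.
  replace ((sg a * Rabs u - sg b * Rabs v) ^ 2)
    with (sg a * sg a * (Rabs u)² + sg b * sg b * (Rabs v)²
          - 2 * sg a * sg b * Rabs u * Rabs v) by (unfold Rsqr; ring).
  rewrite !sg_sqr, <- !Rsqr_abs. unfold Rsqr.
  destruct a, b; simpl; ring.
Qed.

Lemma pair_term_align_le (g u v : R) (a b : bool) :
  0 <= sg a * sg b * g ->
  g * (sg a * Rabs u - sg b * Rabs v) ^ 2 <= g * (u - v) ^ 2.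
Proof.
  intros Hg. apply Rminus_le_0. rewrite pair_term_align_gap.
  assert (sg a * u * (sg b * v) <= Rabs (u * v)).
  { replace (Rabs (u * v)) with (Rabs (sg a * u * (sg b * v)))
      by (rewrite !Rabs_mult, !Rabs_sg; ring).
    apply Rle_abs. }
  apply Rmult_le_pos; [lra | lra].
Qed.

Lemma pair_term_align_eq (g u v : R) (a b : bool) :
  g <> 0 -> 0 <= sg a * sg b * g ->
  g * (sg a * Rabs u - sg b * Rabs v) ^ 2 = g * (u - v) ^ 2 ->
  0 <= (sg a * u) * (sg b * v).
Proof.
  intros Hg0 Hg Heq.
  assert (Hprod : 2 * (sg a * sg b * g) * (Rabs (u * v) - sg a * u * (sg b * v)) = 0)
    by (rewrite <- pair_term_align_gap; lra).
  assert (sg a * sg b * g <> 0).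
  { intros H0. apply Hg0. rewrite <- (Rabs_pos_eq _ Hg), !Rabs_mult, !Rabs_sg in H0.
    apply Rabs_eq_0. lra. }
  assert (Rabs (u * v) = sg a * u * (sg b * v)).
  { apply Rmult_integral in Hprod as [H2 | H2]; [|lra].
    apply Rmult_integral in H2 as [H2 | H2]; lra. }
  rewrite <- H0. apply Rabs_pos.
Qed.

Lemma same_sign_iff (a b : bool) (u v : R) :
  0 < (sg a * u) * (sg b * v) ->
  ((0 < u /\ 0 < v) \/ (u < 0 /\ v < 0)) <-> a = b.
Proof.
  destruct a, b; simpl; intros H; split; intros Hs; try reflexivity; try discriminate.
  all: try (destruct (Rlt_or_le 0 u), (Rlt_or_le 0 v); nra).
  all: destruct Hs as [[? ?] | [? ?]]; nra.
Qed.

Lemma clos_rt1n_crossing (E : nat -> nat -> Prop) (P : nat -> Prop) (a b : nat) :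
  clos_refl_trans_1n nat E a b -> P a -> ~ P b ->
  exists u v, E u v /\ P u /\ ~ P v.
Proof.
  induction 1 as [a | a c b Eac _ IH]; intros Pa nPb; [contradiction|].
  destruct (classic (P c)) as [Pc | nPc]; [now apply IH | now exists a, c].
Qed.

Lemma clos_rt1n_same_sign (E : nat -> nat -> Prop) (p : nat -> R) (a b : nat) :
  (forall u v, E u v -> 0 < p u * p v) -> p b <> 0 ->
  clos_refl_trans_1n nat E a b -> 0 < p a * p b.
Proof.
  intros HE Hb. induction 1 as [a | a c b Eac _ IH].
  - exact (Rsqr_pos_lt _ Hb).
  - specialize (HE a c Eac).
    assert (0 < (p a * p c) * (p c * p b)) by (apply Rmult_lt_0_compat; auto).
    nra.
Qed.

Lemma classW_dips_below_0 (W : R -> R) :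
  in_classW W -> exists m, 0 < m /\ forall e, 0 < e <= m -> W e < W 0.
Proof.
  intros [[HdW _] [_ [[m [Hm [_ [_ [_ Hneg]]]]] _]]].
  exists m; split; [exact Hm|]. intros e He.
  destruct (MVT_cor2 W (Derive W) 0 e) as [c [Hc Hcin]]; [lra | |].
  - intros c _. apply is_derive_Reals, Derive_correct, HdW.
  - assert (Derive W c < 0) by (apply Hneg; right; lra). nra.
Qed.

Lemma quadratic_dips_below_0 (m G A : R) :
  0 < m -> 0 < G -> 0 < A -> exists e, 0 < e <= m /\ e ^ 2 * G - 2 * e * A < 0.
Proof.
  intros Hm HG HA. exists (Rmin m (A / G)).
  assert (HAG : 0 < A / G) by (apply Rdiv_lt_0_compat; assumption).
  assert (Hle : Rmin m (A / G) * G <= A).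
  { replace A with (A / G * G) at 2 by (field; lra).
    apply Rmult_le_compat_r; [lra | apply Rmin_r]. }
  split; [split; [apply Rmin_glb_lt; assumption | apply Rmin_l] |].
  assert (0 < Rmin m (A / G)) by (apply Rmin_glb_lt; assumption).
  nra.
Qed.

Definition coupling (n : nat) (gamma : nat -> nat -> R) (x : nat -> R) : R :=
  sumR n (fun i => sumR n (fun j => gamma i j * (x i - x j) ^ 2)).

Lemma energy_split (n : nat) (W : R -> R) (gamma : nat -> nat -> R) (kappa : R)
  (x : nat -> R) :
  energy n W gamma kappa x = sumR n (fun i => W (x i)) + kappa / 2 * coupling n gamma x.
Proof. reflexivity. Qed.

Definition update (x : nat -> R) (k : nat) (c : R) : nat -> R :=
  fun i => if Nat.eq_dec i k then c else x i.

Lemma update_same (x : nat -> R) (k : nat) (c : R) : update x k c k = c.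
Proof. unfold update. destruct (Nat.eq_dec k k); congruence. Qed.

Lemma update_other (x : nat -> R) (k i : nat) (c : R) : i <> k -> update x k c i = x i.
Proof. unfold update. destruct (Nat.eq_dec i k); congruence. Qed.

Section SignedGraph.

Variables (n : nat) (gamma : nat -> nat -> R) (V1 : nat -> bool).
Hypothesis gamma_sym : forall i j, (i < n)%nat -> (j < n)%nat -> gamma i j = gamma j i.
Hypothesis gamma_signed :
  forall i j, (i < n)%nat -> (j < n)%nat -> 0 <= sg (V1 i) * sg (V1 j) * gamma i j.

Definition align (x : nat -> R) : nat -> R := fun i => sg (V1 i) * Rabs (x i).

Lemma coupling_align_le (x : nat -> R) : coupling n gamma (align x) <= coupling n gamma x.
Proof.
  apply sumR_le; intros i Hi; apply sumR_le; intros j Hj.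
  apply pair_term_align_le, gamma_signed; assumption.
Qed.

Lemma coupling_align_eq (x : nat -> R) :
  coupling n gamma (align x) = coupling n gamma x ->
  forall i j, (i < n)%nat -> (j < n)%nat -> gamma i j <> 0 ->
  0 <= (sg (V1 i) * x i) * (sg (V1 j) * x j).
Proof.
  intros Heq i j Hi Hj Hg.
  assert (Hrows := sumR_le_eq n _ _
    (fun i Hi => sumR_le n _ _ (fun j Hj =>
       pair_term_align_le (gamma i j) (x i) (x j) _ _ (gamma_signed i j Hi Hj))) Heq i Hi).
  assert (Hterm := sumR_le_eq n _ _
    (fun j Hj => pair_term_align_le (gamma i j) (x i) (x j) _ _ (gamma_signed i j Hi Hj))
    Hrows j Hj).
  exact (pair_term_align_eq _ _ _ _ _ Hg (gamma_signed i j Hi Hj) Hterm).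
Qed.

Lemma coupling_sign_pattern_nonpos (c : R) : coupling n gamma (fun i => sg (V1 i) * c) <= 0.
Proof.
  rewrite <- (Rmult_0_r (INR n)), <- sumR_const.
  apply sumR_le; intros i Hi.
  rewrite <- (Rmult_0_r (INR n)), <- sumR_const.
  apply sumR_le; intros j Hj.
  specialize (gamma_signed i j Hi Hj).
  destruct (V1 i), (V1 j); simpl in *; nra.
Qed.

Lemma coupling_change_one (y z : nat -> R) (k : nat) :
  (k < n)%nat -> (forall i, (i < n)%nat -> i <> k -> y i = z i) ->
  coupling n gamma y
  = coupling n gamma z + 2 * sumR n (fun j => gamma k j * ((y k - y j) ^ 2 - (z k - z j) ^ 2)).
Proof.
  intros Hk Hyz.
  set (D := fun i j => gamma i j * ((y i - y j) ^ 2 - (z i - z j) ^ 2)).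
  fold (D k).
  assert (Hsplit : coupling n gamma y = coupling n gamma z + sumR n (fun i => sumR n (D i))).
  { unfold coupling. rewrite <- sumR_plus. apply sumR_ext; intros i _.
    rewrite <- sumR_plus. apply sumR_ext; intros j _. unfold D. ring. }
  assert (Hrow : forall i, (i < n)%nat -> i <> k -> sumR n (D i) = D i k).
  { intros i Hi Hik.
    rewrite (sumR_change_one n (D i) (fun _ => 0) k Hk), sumR_const.
    - ring.
    - intros j Hj Hjk. unfold D. rewrite !Hyz by assumption. ring. }
  assert (Hcol : sumR n (fun i => D i k) = sumR n (D k)).
  { apply sumR_ext; intros i Hi. unfold D. rewrite gamma_sym by assumption. ring. }
  assert (Hdiag : D k k = 0) by (unfold D; ring).
  rewrite Hsplit, (sumR_change_one n _ (fun i => D i k) k Hk Hrow), Hcol, Hdiag.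
  ring.
Qed.

Lemma align_update_local_bound (x : nat -> R) (k : nat) (e : R) :
  (k < n)%nat -> x k = 0 -> 0 <= e ->
  sumR n (fun j => gamma k j * ((update (align x) k (sg (V1 k) * e) k
                                  - update (align x) k (sg (V1 k) * e) j) ^ 2
                                 - (align x k - align x j) ^ 2))
  <= e ^ 2 * sumR n (fun j => Rabs (gamma k j))
     - 2 * e * sumR n (fun j => Rabs (gamma k j) * Rabs (x j)).
Proof.
  intros Hk Hxk He.
  replace (e ^ 2 * sumR n (fun j => Rabs (gamma k j))
           - 2 * e * sumR n (fun j => Rabs (gamma k j) * Rabs (x j)))
    with (sumR n (fun j => e ^ 2 * Rabs (gamma k j)
                           + - (2 * e) * (Rabs (gamma k j) * Rabs (x j))))
    by (rewrite sumR_plus, !sumR_scal; ring).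
  apply sumR_le; intros j Hj.
  assert (Habs := Rabs_pos (gamma k j)).
  rewrite update_same. unfold align. rewrite Hxk, Rabs_R0.
  destruct (Nat.eq_dec j k) as [->|Hjk].
  - rewrite update_same, Hxk, Rabs_R0. nra.
  - rewrite update_other by exact Hjk.
    replace (gamma k j * ((sg (V1 k) * e - sg (V1 j) * Rabs (x j)) ^ 2
                          - (sg (V1 k) * 0 - sg (V1 j) * Rabs (x j)) ^ 2))
      with (sg (V1 k) * sg (V1 k) * gamma k j * e ^ 2
            - 2 * e * (sg (V1 k) * sg (V1 j) * gamma k j) * Rabs (x j)) by ring.
    rewrite sg_sqr, sg_mul_abs by (apply gamma_signed; assumption).
    assert (gamma k j <= Rabs (gamma k j)) by apply Rle_abs.
    nra.
Qed.

Section Minimizers.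

Variables (W : R -> R) (kappa : R).
Hypothesis W_even : forall t, W (- t) = W t.
Hypothesis kappa_pos : 0 < kappa.

Definition is_minimizer (x : nat -> R) : Prop :=
  forall y, energy n W gamma kappa x <= energy n W gamma kappa y.

Lemma sumR_W_align (x : nat -> R) : sumR n (fun i => W (align x i)) = sumR n (fun i => W (x i)).
Proof. apply sumR_ext; intros i _. apply W_sg_abs, W_even. Qed.

Lemma energy_align_le (x : nat -> R) :
  energy n W gamma kappa (align x) <= energy n W gamma kappa x.
Proof.
  rewrite !energy_split, sumR_W_align.
  assert (Hc := coupling_align_le x).
  apply Rplus_le_compat_l, Rmult_le_compat_l; lra.
Qed.

Lemma minimizer_edge_sign (x : nat -> R) :
  is_minimizer x ->
  forall i j, (i < n)%nat -> (j < n)%nat -> gamma i j <> 0 ->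
  0 <= (sg (V1 i) * x i) * (sg (V1 j) * x j).
Proof.
  intros Hmin. apply coupling_align_eq.
  assert (Hle := coupling_align_le x).
  assert (Hmin_align := Hmin (align x)).
  rewrite !energy_split, sumR_W_align in Hmin_align.
  assert (coupling n gamma x <= coupling n gamma (align x)).
  { apply (Rmult_le_reg_l (kappa / 2)); lra. }
  lra.
Qed.

Lemma energy_change_one (y z : nat -> R) (k : nat) :
  (k < n)%nat -> (forall i, (i < n)%nat -> i <> k -> y i = z i) ->
  energy n W gamma kappa y
  = energy n W gamma kappa z + (W (y k) - W (z k))
    + kappa * sumR n (fun j => gamma k j * ((y k - y j) ^ 2 - (z k - z j) ^ 2)).
Proof.
  intros Hk Hyz. rewrite !energy_split, (coupling_change_one y z k Hk Hyz).
  rewrite (sumR_change_one n (fun i => W (y i)) (fun i => W (z i)) k Hk)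
    by (intros i Hi Hik; rewrite Hyz by assumption; reflexivity).
  field.
Qed.

Variable m : R.
Hypothesis m_pos : 0 < m.
Hypothesis W_dip : forall e, 0 < e <= m -> W e < W 0.

Lemma minimizer_no_zero_next_to_nonzero (x : nat -> R) (k j : nat) :
  is_minimizer x -> adj n gamma k j -> x k = 0 -> x j <> 0 -> False.
Proof.
  intros Hmin [Hk [Hj Hg]] Hxk Hxj.
  set (G := sumR n (fun j => Rabs (gamma k j))).
  set (A := sumR n (fun j => Rabs (gamma k j) * Rabs (x j))).
  assert (Hgk : 0 < Rabs (gamma k j)) by (apply Rabs_pos_lt; exact Hg).
  assert (HG : 0 < G).
  { apply (Rlt_le_trans _ (Rabs (gamma k j))); [exact Hgk|].
    apply (sumR_ge_term n (fun j => Rabs (gamma k j))); [exact Hj|].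
    intros; apply Rabs_pos. }
  assert (HA : 0 < A).
  { apply (Rlt_le_trans _ (Rabs (gamma k j) * Rabs (x j))).
    - apply Rmult_lt_0_compat; [exact Hgk | apply Rabs_pos_lt; exact Hxj].
    - apply (sumR_ge_term n (fun j => Rabs (gamma k j) * Rabs (x j))); [exact Hj|].
      intros; apply Rmult_le_pos; apply Rabs_pos. }
  destruct (quadratic_dips_below_0 m G A m_pos HG HA) as [e [He Hquad]].
  set (y := update (align x) k (sg (V1 k) * e)).
  assert (Hstep := energy_change_one y (align x) k Hk
                     (fun i _ Hik => update_other (align x) k i _ Hik)).
  assert (Hloc := align_update_local_bound x k e Hk Hxk ltac:(lra)).
  fold y in Hloc. fold G A in Hloc.
  assert (HWy : W (y k) = W e) by (unfold y; rewrite update_same; apply W_sg, W_even).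
  assert (HWz : W (align x k) = W 0)
    by (unfold align; rewrite W_sg_abs, Hxk by exact W_even; reflexivity).
  assert (Hdip := W_dip e He).
  assert (kappa * (e ^ 2 * G - 2 * e * A) < 0) by nra.
  assert (Halign := energy_align_le x).
  assert (Hy := Hmin y).
  assert (kappa * sumR n (fun j => gamma k j * ((y k - y j) ^ 2 - (align x k - align x j) ^ 2))
          <= kappa * (e ^ 2 * G - 2 * e * A)) by (apply Rmult_le_compat_l; lra).
  lra.
Qed.

Lemma minimizer_not_all_zero (x : nat -> R) :
  (0 < n)%nat -> is_minimizer x -> ~ (forall i, (i < n)%nat -> x i = 0).
Proof.
  intros Hn Hmin Hzero.
  set (y := fun i => sg (V1 i) * m).
  assert (Hx : energy n W gamma kappa x = INR n * W 0).
  { rewrite energy_split, <- sumR_const.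
    rewrite (sumR_ext n (fun i => W (x i)) (fun _ => W 0))
      by (intros i Hi; rewrite Hzero by exact Hi; reflexivity).
    assert (Hcx : coupling n gamma x = 0).
    { unfold coupling. rewrite <- (Rmult_0_r (INR n)), <- sumR_const.
      apply sumR_ext; intros i Hi.
      rewrite <- (Rmult_0_r (INR n)), <- sumR_const.
      apply sumR_ext; intros j Hj. rewrite !Hzero by assumption. ring. }
    rewrite Hcx. ring. }
  assert (Hy : energy n W gamma kappa y <= INR n * W m).
  { rewrite energy_split, <- sumR_const.
    rewrite (sumR_ext n (fun i => W (y i)) (fun _ => W m))
      by (intros i _; apply W_sg, W_even).
    assert (Hc : coupling n gamma y <= 0) by apply coupling_sign_pattern_nonpos.
    assert (kappa / 2 * coupling n gamma y <= kappa / 2 * 0)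
      by (apply Rmult_le_compat_l; lra).
    lra. }
  assert (0 < INR n) by (apply lt_0_INR; exact Hn).
  assert (W m < W 0) by (apply W_dip; lra).
  assert (Hxy := Hmin y).
  nra.
Qed.

Lemma minimizer_nonvanishing (x : nat -> R) :
  connected_graph n gamma -> is_minimizer x -> forall k, (k < n)%nat -> x k <> 0.
Proof.
  intros Hconn Hmin k Hk Hxk.
  destruct (classic (exists j, (j < n)%nat /\ x j <> 0)) as [[j [Hj Hxj]] | Hnone].
  - destruct (clos_rt1n_crossing _ (fun i => x i = 0) k j (Hconn k j Hk Hj) Hxk Hxj)
      as (u & v & Huv & Hu & Hv).
    exact (minimizer_no_zero_next_to_nonzero x u v Hmin Huv Hu Hv).
  - apply (minimizer_not_all_zero x); [lia | exact Hmin |].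
    intros i Hi. apply NNPP. intros Hxi. apply Hnone. now exists i.
Qed.

Lemma minimizer_sign_pattern (x : nat -> R) :
  connected_graph n gamma -> is_minimizer x ->
  forall i j, (i < n)%nat -> (j < n)%nat -> 0 < (sg (V1 i) * x i) * (sg (V1 j) * x j).
Proof.
  intros Hconn Hmin.
  assert (Hp : forall i, (i < n)%nat -> sg (V1 i) * x i <> 0).
  { intros i Hi. apply Rmult_integral_contrapositive_currified.
    - destruct (V1 i); simpl; lra.
    - exact (minimizer_nonvanishing x Hconn Hmin i Hi). }
  intros i j Hi Hj.
  apply (clos_rt1n_same_sign (adj n gamma) (fun i => sg (V1 i) * x i));
    [| exact (Hp j Hj) | exact (Hconn i j Hi Hj)].
  intros u v [Hu [Hv Huv]].
  assert (0 <= (sg (V1 u) * x u) * (sg (V1 v) * x v))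
    by exact (minimizer_edge_sign x Hmin u v Hu Hv Huv).
  assert ((sg (V1 u) * x u) * (sg (V1 v) * x v) <> 0)
    by (apply Rmult_integral_contrapositive_currified; auto).
  lra.
Qed.

End Minimizers.

End SignedGraph.

Theorem mainTheorem1
  (n : nat) (gamma : nat -> nat -> R)
  (Hsym : forall i j, (i < n)%nat -> (j < n)%nat -> gamma i j = gamma j i)
  (Hconn : connected_graph n gamma)
  (Hbal : balanced n gamma)
  (V1 : nat -> bool) (* V1 = {i | V1 i = true}, V2 = {i | V1 i = false} *)
  (Hsame : forall i j, (i < n)%nat -> (j < n)%nat -> V1 i = V1 j -> 0 <= gamma i j)
  (Hdiff : forall i j, (i < n)%nat -> (j < n)%nat -> V1 i <> V1 j -> gamma i j <= 0)
  (W : R -> R) (HW : in_classW W)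
  (kappa : R) (Hkappa : 0 < kappa)
  (x : nat -> R)
  (Hmin : forall y : nat -> R, energy n W gamma kappa x <= energy n W gamma kappa y) :
  (forall i, (i < n)%nat -> x i <> 0) /\
  (forall i j, (i < n)%nat -> (j < n)%nat ->
     ((0 < x i /\ 0 < x j) \/ (x i < 0 /\ x j < 0)) <-> V1 i = V1 j).
Proof.
  destruct (classW_dips_below_0 W HW) as [m [Hm Hdip]].
  assert (Heven : forall t, W (- t) = W t) by apply HW.
  assert (Hsigned : forall i j, (i < n)%nat -> (j < n)%nat ->
                      0 <= sg (V1 i) * sg (V1 j) * gamma i j)
    by (intros i j Hi Hj; apply sg_mul_nonneg; auto).
  split.
  - exact (minimizer_nonvanishing n gamma V1 Hsym Hsigned W kappa Heven Hkappa m Hm Hdip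
             x Hconn Hmin).
  - intros i j Hi Hj. apply same_sign_iff.
    exact (minimizer_sign_pattern n gamma V1 Hsym Hsigned W kappa Heven Hkappa m Hm Hdip
             x Hconn Hmin i j Hi Hj).
Qed.
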